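(* Let $n \ge 2$ be an integer. For $1 \le i \le n-1$ and $j = n-i$, define the polynomial $$P_i(t) = \left(1 + t\sqrt{\tfrac{j}{i}}\right)^{i}\left(1 - t\sqrt{\tfrac{i}{j}}\right)^{j}.$$ If $1 \le i \le n-2$ (and $j = n-i$), then $P_i(t) > P_{i+1}(t)$ for all $0 < t < \sqrt{\frac{j-1}{i+1}}$. Consequently, $$P_{n-1}(t) < \dots < P_2(t) < P_1(t) \quad \text{for } 0 < t < \frac{1}{\sqrt{n-1}}.$$ *)

From Stdlib Require Import Reals.
Open Scope R_scope.

Definition P (n i : nat) (t : R) : R :=
  let j := (n - i)%nat in
  (1 + t * sqrt (INR j / INR i)) ^ i * (1 - t * sqrt (INR i / INR j)) ^ j.

(* Put a = sqrt (j/i) and b = sqrt (i/j), so that a b = 1 and i a = j b.  Then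
   ln P_i (t) = i ln (1 + t a) + j ln (1 - t b) has derivative
   -n t / ((1 + t a) (1 - t b)) = -n t / (1 + t (a - b) - t^2).  Passing from i
   to i + 1 decreases a and increases b, so the denominator decreases for t > 0;
   hence ln P_i - ln P_(i+1) vanishes at 0 and is strictly increasing. *)

From Coquelicot Require Import Coquelicot.
From Stdlib Require Import Reals Lra Lia Psatz.
Open Scope R_scope.

Definition logP (k m a b s : R) : R := k * ln (1 + s * a) + m * ln (1 - s * b).

Lemma is_derive_logP (k m a b s : R) :
  a * b = 1 -> k * a = m * b -> 0 < 1 + s * a -> 0 < 1 - s * b ->
  is_derive (logP k m a b) s (- (k + m) * s / ((1 + s * a) * (1 - s * b))).
Proof.
intros Hab Hkm Ha Hb.
assert (Hnum : k * a * (1 - s * b) - m * b * (1 + s * a) = - (k + m) * s).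
{ replace (k * a * (1 - s * b) - m * b * (1 + s * a))
    with (k * a - m * b - s * k * (a * b) - s * m * (a * b)) by ring.
  rewrite Hkm, Hab. ring. }
replace (- (k + m) * s / ((1 + s * a) * (1 - s * b)))
  with (k * a / (1 + s * a) - m * b / (1 - s * b))
  by (rewrite <- Hnum; field; lra).
unfold logP. auto_derive.
- lra.
- field. lra.
Qed.

Section LogPComparison.

Variables k m a b k' m' a' b' : R.
Hypotheses (Ha : 0 < a) (Hab : a * b = 1) (Hkm : k * a = m * b)
  (Ha' : 0 < a') (Hab' : a' * b' = 1) (Hkm' : k' * a' = m' * b')
  (Hsum : k + m = k' + m') (Hsum_pos : 0 < k + m) (Hlt : a' < a).

Lemma logP_b_lt : b < b'.
Proof. assert (0 < b) by nra. assert (0 < b') by nra. nra. Qed.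

Lemma logP_factors_pos (s : R) : 0 <= s < a' ->
  0 < 1 + s * a /\ 0 < 1 - s * b /\ 0 < 1 + s * a' /\ 0 < 1 - s * b'.
Proof. intros Hs. pose proof logP_b_lt. repeat split; nra. Qed.

Lemma logP_lt (t : R) : 0 < t < a' -> logP k' m' a' b' t < logP k m a b t.
Proof.
intros Ht.
set (g s := (1 + s * a) * (1 - s * b)).
set (g' s := (1 + s * a') * (1 - s * b')).
set (h s := logP k m a b s - logP k' m' a' b' s).
set (dh s := - (k + m) * s / g s - - (k' + m') * s / g' s).
assert (Hder : forall s, 0 <= s <= t -> derivable_pt_lim h s (dh s)).
{ intros s Hs. destruct (logP_factors_pos s) as (P1 & P2 & P3 & P4); [lra|].
  apply is_derive_Reals, (is_derive_minus (V := R_NormedModule));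
    apply is_derive_logP; assumption. }
destruct (MVT_cor2 h dh 0 t ltac:(lra) Hder) as [c [Hmvt Hc]].
destruct (logP_factors_pos c) as (P1 & P2 & P3 & P4); [lra|].
pose proof logP_b_lt as Hb.
assert (Hg : 0 < g' c < g c).
{ unfold g, g'. split; [nra|].
  replace ((1 + c * a) * (1 - c * b)) with (1 + c * (a - b) - c * c * (a * b)) by ring.
  replace ((1 + c * a') * (1 - c * b')) with (1 + c * (a' - b') - c * c * (a' * b'))
    by ring.
  rewrite Hab, Hab'. nra. }
assert (Hdh : 0 < dh c).
{ unfold dh. rewrite <- Hsum.
  replace (- (k + m) * c / g c - - (k + m) * c / g' c)
    with ((k + m) * c * (g c - g' c) / (g c * g' c)) by (field; lra).
  apply Rdiv_lt_0_compat; [apply Rmult_lt_0_compat|]; nra. }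
assert (Hh0 : h 0 = 0).
{ unfold h, logP. rewrite !Rmult_0_l, Rplus_0_r, Rminus_0_r, ln_1. ring. }
assert (0 < h t) by nra.
unfold h in *. lra.
Qed.

End LogPComparison.

Lemma sqrt_div_mul_sqrt_div (k m : R) : 0 < k -> 0 < m ->
  sqrt (m / k) * sqrt (k / m) = 1.
Proof.
intros Hk Hm.
rewrite <- sqrt_mult by (apply Rlt_le, Rdiv_lt_0_compat; lra).
replace (m / k * (k / m)) with 1 by (field; lra).
apply sqrt_1.
Qed.

Lemma mul_sqrt_div_sym (k m : R) : 0 < k -> 0 < m ->
  k * sqrt (m / k) = m * sqrt (k / m).
Proof.
intros Hk Hm.
assert (Hpos : 0 < sqrt (m / k)) by (apply sqrt_lt_R0, Rdiv_lt_0_compat; lra).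
apply Rmult_eq_reg_r with (sqrt (m / k)); [|lra].
rewrite Rmult_assoc, sqrt_sqrt by (apply Rlt_le, Rdiv_lt_0_compat; lra).
rewrite Rmult_assoc, (Rmult_comm (sqrt (k / m))), sqrt_div_mul_sqrt_div by lra.
field. lra.
Qed.

Lemma P_eq_exp_logP (n i : nat) (t : R) :
  (1 <= i < n)%nat -> 0 <= t -> t < sqrt (INR (n - i) / INR i) ->
  P n i t = exp (logP (INR i) (INR (n - i))
                   (sqrt (INR (n - i) / INR i)) (sqrt (INR i / INR (n - i))) t).
Proof.
intros Hi Ht Hta.
assert (Hk : 0 < INR i) by (apply lt_0_INR; lia).
assert (Hm : 0 < INR (n - i)) by (apply lt_0_INR; lia).
pose proof (sqrt_div_mul_sqrt_div _ _ Hk Hm) as Hab.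
assert (0 <= sqrt (INR (n - i) / INR i)) by apply sqrt_pos.
assert (0 <= sqrt (INR i / INR (n - i))) by apply sqrt_pos.
unfold P, logP. cbv zeta.
rewrite exp_plus, <- !Rpower_pow by nra.
reflexivity.
Qed.

Lemma P_succ_lt (n i : nat) (t : R) :
  (1 <= i)%nat -> (i <= n - 2)%nat ->
  0 < t -> t < sqrt (INR (n - i - 1) / INR (i + 1)) ->
  P n (i + 1) t < P n i t.
Proof.
intros Hi Hin Ht Hta.
replace (n - i - 1)%nat with (n - (i + 1))%nat in Hta by lia.
set (k := INR i). set (m := INR (n - i)).
assert (Hk : 1 <= k) by (apply (le_INR 1); lia).
assert (Hm : 2 <= m) by (apply (le_INR 2); lia).
assert (Ek : INR (i + 1) = k + 1) by (rewrite plus_INR; reflexivity).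
assert (Em : INR (n - (i + 1)) = m - 1)
  by (unfold m; rewrite !minus_INR, plus_INR by lia; simpl; ring).
rewrite Ek, Em in Hta.
assert (Hlt : sqrt ((m - 1) / (k + 1)) < sqrt (m / k)).
{ apply sqrt_lt_1; try (apply Rlt_le, Rdiv_lt_0_compat; lra).
  apply Rlt_0_minus.
  replace (m / k - (m - 1) / (k + 1)) with ((m + k) / (k * (k + 1))) by (field; lra).
  apply Rdiv_lt_0_compat; nra. }
rewrite (P_eq_exp_logP n i), (P_eq_exp_logP n (i + 1)); try lia; try lra.
- fold k m. rewrite Ek, Em.
  apply exp_increasing, logP_lt; try lra;
    apply sqrt_div_mul_sqrt_div || apply mul_sqrt_div_sym; lra.
- rewrite Em, Ek. exact Hta.
- fold k m. lra.
Qed.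

Lemma inv_sqrt_le_sqrt_div (k m : R) : 0 <= k -> 1 <= m ->
  1 / sqrt (k + m) <= sqrt (m / (k + 1)).
Proof.
intros Hk Hm.
replace (1 / sqrt (k + m)) with (sqrt (1 / (k + m)))
  by (rewrite sqrt_div_alt, sqrt_1 by lra; reflexivity).
apply sqrt_le_1; try (apply Rlt_le, Rdiv_lt_0_compat; lra).
apply Rmult_le_reg_r with ((k + m) * (k + 1)); [nra|].
replace (1 / (k + m) * ((k + m) * (k + 1))) with (k + 1) by (field; lra).
replace (m / (k + 1) * ((k + m) * (k + 1))) with (m * (k + m)) by (field; lra).
nra.
Qed.

Theorem lemma2 (n : nat) (hn : (2 <= n)%nat) :
  (forall (i : nat) (t : R), (1 <= i)%nat -> (i <= n - 2)%nat ->
     0 < t -> t < sqrt (INR (n - i - 1) / INR (i + 1)) ->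
     P n (i + 1) t < P n i t) /\
  (forall t : R, 0 < t -> t < 1 / sqrt (INR (n - 1)) ->
     forall i : nat, (1 <= i)%nat -> (i <= n - 2)%nat ->
     P n (i + 1) t < P n i t).
Proof.
split; [exact (P_succ_lt n)|].
intros t Ht Htn i Hi Hin.
apply P_succ_lt; try assumption.
eapply Rlt_le_trans; [exact Htn|].
replace (n - 1)%nat with (i + (n - i - 1))%nat by lia.
rewrite !plus_INR.
apply inv_sqrt_le_sqrt_div; [apply pos_INR | apply (le_INR 1); lia].
Qed.
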